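(* Let $(L,\sqsubseteq)$ be a countably complete lattice, $F:L\to L$ monotone and $\omega$-continuous, $k\in\omega$, and $b\in L^\omega$ with $b_{n+1}\sqsubseteq b_n$ for all $n$. Define sequences $G^j b$ by $(G^0b)_n=b_n$ and $(G^{j}b)_n=F\big((G^{j-1}b)_n\big)\sqcap b_n$ for $j\ge1$. If $F\big((G^kb)_n\big)\sqsubseteq b_n$ for all $n$, then $\sup_{i\ge n}F^i(\bot)\sqsubseteq b_n$ for all $n$. In particular, for $\ell\in L$ and $G_\ell(m)=F(m)\sqcap\ell$: if $F(G_\ell^k(\ell))\sqsubseteq\ell$ then $\sup_i F^i(\bot)=\mathrm{lfp}\,F\sqsubseteq\ell$.
   Context: A countably complete lattice is a lattice in which every countable subset (including $\emptyset$) has a supremum and an infimum, with least element $\bot$ and meet $\sqcap$. $F$ is $\omega$-continuous if $F(\sup_n c_n)=\sup_n F(c_n)$ for every ascending chain $(c_n)$. $F^i$ is the $i$-fold iterate. *)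

From mathcomp Require Import all_boot all_order.
Set Implicit Arguments. Unset Strict Implicit. Unset Printing Implicit Defensive.
Import Order.Theory.
Local Open Scope order_scope.

Section CCL.
Context {disp : Order.disp_t} {L : bLatticeType disp}.

Definition is_ub (A : L -> Prop) (x : L) := forall y, A y -> y <= x.
Definition is_lb (A : L -> Prop) (x : L) := forall y, A y -> x <= y.
Definition is_sup (A : L -> Prop) (x : L) :=
  is_ub A x /\ forall z, is_ub A z -> x <= z.
Definition is_inf (A : L -> Prop) (x : L) :=
  is_lb A x /\ forall z, is_lb A z -> z <= x.

Definition seq_range (u : nat -> L) : L -> Prop := fun y => exists i, y = u i.

(* Nonempty countable subsets are exactly ranges of sequences; the empty set
   has sup \bot (bottom of the bLattice) and inf = a top element. *)
Definition countably_complete :=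
  (forall u : nat -> L, exists s, is_sup (seq_range u) s) /\
  (forall u : nat -> L, exists s, is_inf (seq_range u) s) /\
  (exists t, is_inf (fun _ => False) t).

Definition monotone (F : L -> L) := forall x y, x <= y -> F x <= F y.

Definition omega_continuous (F : L -> L) :=
  forall c : nat -> L, (forall n, c n <= c n.+1) ->
  forall s, is_sup (seq_range c) s -> is_sup (seq_range (fun n => F (c n))) (F s).

Fixpoint Giter (F : L -> L) (b : nat -> L) (j n : nat) : L :=
  match j with
  | 0 => b n
  | j'.+1 => F (Giter F b j' n) `&` b n
  end.

Definition Gl (F : L -> L) (l : L) (m : L) : L := F m `&` l.

Definition is_lfp (F : L -> L) (x : L) :=
  F x = x /\ forall y, F y = y -> x <= y.

End CCL.

From mathcomp Require Import all_boot all_order.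
Import Order.Theory.
Local Open Scope order_scope.

(* The iterates [G_l^j l] form a descending chain below [l].  If
   [F (G_l^k l) <= l], then [G_l^k l] is a pre-fixed point of [F], since also
   [F (G_l^k l) <= F (G_l^(k-1) l)] by monotonicity and [G_l^k l] is the meet
   of these two bounds.  Every Kleene iterate [F^i \bot] lies below any
   pre-fixed point, hence so does their supremum, which is [lfp F] by
   omega-continuity.  For a sequence [b], [(G^k b)_n] is just [G_(b n)^k (b n)]. *)

Section KleeneIterates.
Context {disp : Order.disp_t} {L : bLatticeType disp}.
Variable F : L -> L.
Hypothesis Fmono : monotone F.

Lemma iter_bot_homo i : iter i F \bot <= iter i.+1 F \bot.
Proof. by elim: i => [|i IH]; [rewrite le0x | apply: Fmono]. Qed.

Lemma iter_bot_le_prefixed m i : F m <= m -> iter i F \bot <= m.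
Proof.
move=> Fm_le; elim: i => [|i IH]; first by rewrite le0x.
by apply: le_trans Fm_le; apply: Fmono.
Qed.

Lemma kleene_sup_le_prefixed m s :
  F m <= m -> is_sup (seq_range (fun i => iter i F \bot)) s -> s <= m.
Proof. by move=> Fm_le [_ s_least]; apply: s_least => _ [i ->]; apply: iter_bot_le_prefixed. Qed.

Lemma kleene_sup_is_lfp s :
  omega_continuous F -> is_sup (seq_range (fun i => iter i F \bot)) s -> is_lfp F s.
Proof.
move=> Fcont s_sup; have [s_ub s_least] := s_sup.
have [Fs_ub Fs_least] := Fcont _ iter_bot_homo s s_sup.
have Fs_eq : F s = s.
  apply: le_anti; rewrite Fs_least ?s_least //.
  - by move=> _ [[|i] ->]; [rewrite le0x | apply: Fs_ub; exists i].
  - by move=> _ [i ->]; apply: s_ub; exists i.+1.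
split=> // y Fy_eq; apply: kleene_sup_le_prefixed s_sup.
by rewrite Fy_eq.
Qed.

End KleeneIterates.

Section MeetIterates.
Context {disp : Order.disp_t} {L : bLatticeType disp}.
Variable F : L -> L.

Lemma Gl_iter_le l j : iter j (Gl F l) l <= l.
Proof. by case: j => [|j] //=; rewrite /Gl leIr. Qed.

Lemma Giter_Gl b j n : Giter F b j n = iter j (Gl F (b n)) (b n).
Proof. by elim: j => [|j IH] //=; rewrite IH. Qed.

Hypothesis Fmono : monotone F.

Lemma Gl_iter_homo l j : iter j.+1 (Gl F l) l <= iter j (Gl F l) l.
Proof.
elim: j => [|j IH]; first by rewrite /= /Gl leIr.
by rewrite [iter j.+2 _ _]/= /Gl lexI leIr andbT (le_trans (leIl _ _)) ?Fmono.
Qed.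

Lemma Gl_iter_prefixed l k :
  F (iter k (Gl F l) l) <= l -> F (iter k (Gl F l) l) <= iter k (Gl F l) l.
Proof.
case: k => [//|j] F_le_l.
by rewrite {2}[iter j.+1 _ _]/= /Gl lexI F_le_l andbT Fmono ?Gl_iter_homo.
Qed.

End MeetIterates.

Theorem mainTheorem10 (disp : Order.disp_t) (L : bLatticeType disp)
  (HL : @countably_complete disp L) (F : L -> L)
  (Fmono : monotone F) (Fcont : omega_continuous F) (k : nat) :
  (forall b : nat -> L, (forall n, b n.+1 <= b n) ->
     (forall n, F (Giter F b k n) <= b n) ->
     forall n s, is_sup (fun y => exists i, (n <= i)%N /\ y = iter i F \bot) s ->
       s <= b n)
  /\
  (forall l : L, F (iter k (Gl F l) l) <= l ->
     forall s, is_sup (seq_range (fun i => iter i F \bot)) s ->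
       is_lfp F s /\ s <= l).
Proof.
split.
- move=> b _ Fb_le n s [_ s_least].
  have := Fb_le n; rewrite Giter_Gl => /(Gl_iter_prefixed F Fmono) prefixed.
  apply: le_trans (Gl_iter_le F (b n) k).
  by apply: s_least => _ [i [_ ->]]; apply: iter_bot_le_prefixed prefixed.
- move=> l F_le_l s s_sup; split; first exact: kleene_sup_is_lfp.
  apply: le_trans (Gl_iter_le F l k).
  exact: kleene_sup_le_prefixed (Gl_iter_prefixed F Fmono _ _ F_le_l) s_sup.
Qed.
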